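(* Let $P\subset\mathbb{R}^2$ be a finite point set of size $n$ satisfying the standing condition, let $X\subseteq P$ be its set of extreme points (given as input), and let $\varepsilon\in(0,1)$. The algorithm E-GRMR described in the context runs in $O(n^3)$ time.
   Context: For finite $Q \subset \mathbb{R}^2$ and unit $x$, $\omega(x,Q)=\max_{p\in Q}\langle p,x\rangle$. Standing condition: $\omega(x,P)>0$ for all $x\in\mathbb{S}^1$. Extreme points $X=\{t_1,\dots,t_m\}$ are the vertices of the convex hull of $P$ (the points that are top-ranked, $\langle p,x\rangle = \omega(x,P)$, for some nonzero $x$), indexed counterclockwise by polar angle, cyclically. Algorithm E-GRMR on input $(P,X,\varepsilon)$: (1) For each $i$, compute the unit vector $x^*_i$ with $\langle t_i,x\rangle=\langle t_{i+1},x\rangle$, $\langle t_i,x\rangle>0$; set $S=X$ and add to $S$ each $p\in P\setminus X$ for which some $i$ has $\langle p,x^*_i\rangle\ge(1-\varepsilon)\langle t_i,x^*_i\rangle$; index $S$ as $s_1,\dots,s_{|S|}$ counterclockwise by polar angle. (2) Build a directed graph $G$ on vertex set $S$: for each ordered pair $i\neq j$, skip if the counterclockwise angle from $s_i$ to $s_j$ is at least $\pi$; otherwise compute $l_{ij}=\max_{t\in X[s_i,s_j]}(1-\langle s_i,x^*\rangle/\langle t,x^*\rangle)$ (taken as $0$ if $X[s_i,s_j]$ is empty), where $X[s_i,s_j]$ is the set of extreme points with polar angle in the counterclockwise range from $s_i$ to $s_j$ inclusive and $x^*$ is the unit vector with $\langle s_i,x^*\rangle=\langle s_j,x^*\rangle$,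 $\langle s_i,x^*\rangle\ge0$; add edge $s_i\to s_j$ if $l_{ij}\le\varepsilon$. (3) Find a shortest directed cycle $C^*$ of $G$ by running Dijkstra's algorithm from each vertex, and return its vertex set. *)

From mathcomp Require Import all_boot all_order all_algebra.
From mathcomp Require Import reals trigo.
Set Implicit Arguments. Unset Strict Implicit. Unset Printing Implicit Defensive.
Import Order.TTheory GRing.Theory Num.Theory.

(* Cost model: a writer monad counting unit-cost primitive steps            *)
(* (real-RAM: one tick per primitive real operation / comparison /          *)
(*  constant-size geometric primitive, per array read/write, per list cell  *)
(*  traversed).                                                             *)
Definition M (A : Type) := (A * nat)%type.
Definition ret {A} (a : A) : M A := (a, 0%N).
Definition bind {A B} (m : M A) (f : A -> M B) : M B :=
  let (a, c) := m in let (b, d) := f a in (b, (c + d)%N).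
Definition tick {A} (a : A) : M A := (a, 1%N).
(* pay n steps (e.g. linear-time list shuffling) *)
Definition pay (n : nat) : M unit := (tt, n).
Definition cost {A} (m : M A) : nat := m.2.
Definition result {A} (m : M A) : A := m.1.

Notation "x <- m ;; k" := (bind m (fun x => k)) (at level 61, m at next level, right associativity).

Fixpoint mmap {A B} (f : A -> M B) (s : seq A) : M (seq B) :=
  match s with
  | [::] => ret [::]
  | x :: s' => y <- f x ;; ys <- mmap f s' ;; ret (y :: ys)
  end.

Fixpoint mfoldl {A B} (f : B -> A -> M B) (b : B) (s : seq A) : M B :=
  match s with
  | [::] => ret b
  | x :: s' => b' <- f b x ;; mfoldl f b' s'
  end.

Definition mexists {A} (f : A -> M bool) (s : seq A) : M bool :=
  mfoldl (fun b x => c <- f x ;; tick (b || c)) false s.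

Definition mfilter {A} (f : A -> M bool) (s : seq A) : M (seq A) :=
  bs <- mmap f s ;; _ <- pay (size s) ;; ret [seq p.1 | p <- zip s bs & p.2].

Fixpoint minsert {A} (le : A -> A -> M bool) (x : A) (s : seq A) : M (seq A) :=
  match s with
  | [::] => ret [:: x]
  | y :: s' => b <- le x y ;;
      if b then ret (x :: y :: s') else (r <- minsert le x s' ;; ret (y :: r))
  end.

Fixpoint msort {A} (le : A -> A -> M bool) (s : seq A) : M (seq A) :=
  match s with
  | [::] => ret [::]
  | x :: s' => r <- msort le s' ;; minsert le x r
  end.

Section Geometry.
Local Open Scope ring_scope.
Variable R : realType.
Definition pt := (R * R)%type.

Definition dotp (p x : pt) : R := p.1 * x.1 + p.2 * x.2.
Definition normp (p : pt) : R := Num.sqrt (p.1 ^+ 2 + p.2 ^+ 2).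
Definition is_unit (x : pt) : Prop := normp x = 1.

(* omega(x, Q) = max_{p in Q} <p, x>  (Q nonempty; -oo is irrelevant) *)
Definition omega (x : pt) (Q : seq pt) : R :=
  \big[Num.max/(dotp (head (0, 0) Q) x)]_(p <- Q) dotp p x.

Definition standing (P : seq pt) : Prop :=
  forall x : pt, is_unit x -> 0 < omega x P.

(* p is a vertex of the convex hull of P: the unique maximiser in P of
   some linear functional *)
Definition extreme_point (P : seq pt) (p : pt) : Prop :=
  p \in P /\ exists x : pt, x != (0, 0) /\
    forall q, q \in P -> q != p -> dotp q x < dotp p x.

(* polar angle in [0, 2 pi) *)
Definition polar (p : pt) : R :=
  if p == (0, 0) then 0 else
  let c := acos (p.1 / normp p) in
  if 0 <= p.2 then c else pi *+ 2 - c.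

Definition ccw (p q : pt) : R :=
  let d := polar q - polar p in if d < 0 then d + pi *+ 2 else d.

(* unit vector x with <p,x> = <q,x> and <p,x> >= 0 *)
Definition xstar (p q : pt) : pt :=
  let d := (q.1 - p.1, q.2 - p.2) in
  let r := normp d in
  let u := (- d.2 / r, d.1 / r) in
  if dotp p u < 0 then (- u.1, - u.2) else u.

Definition c_dot (p x : pt) : M R := tick (dotp p x).
Definition c_ccw (p q : pt) : M R := tick (ccw p q).
Definition c_xstar (p q : pt) : M pt := tick (xstar p q).
Definition c_eq (p q : pt) : M bool := tick (p == q).
Definition c_le_polar (p q : pt) : M bool := tick (polar p <= polar q).
Definition c_mem (p : pt) (s : seq pt) : M bool := mexists (c_eq p) s.

Definition step1 (P X : seq pt) (eps : R) : M (seq pt) :=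
  Xs <- msort c_le_polar X ;;
  _ <- pay (size Xs) ;;
  let pairs := zip Xs (rot 1 Xs) in
  xs <- mmap (fun pr => c_xstar pr.1 pr.2) pairs ;;
  _ <- pay (size Xs) ;;
  let txs := zip Xs xs in
  extra <- mfilter (fun p =>
      inX <- c_mem p X ;;
      if inX then ret false else
      mexists (fun tx =>
         a <- c_dot p tx.2 ;; b <- c_dot tx.1 tx.2 ;;
         tick ((1 - eps) * b <= a)) txs) P ;;
  _ <- pay (size X + size extra) ;;
  msort c_le_polar (X ++ extra).

Definition c_edge (X : seq pt) (eps : R) (i : nat) (si : pt) (j : nat) (sj : pt)
  : M bool :=
  if i == j then tick false else
  a <- c_ccw si sj ;;
  if pi <= a then tick false else
  x <- c_xstar si sj ;;
  l <- mfoldl (fun acc t =>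
         b <- c_ccw si t ;;
         if a < b then tick acc else
         u <- c_dot si x ;; v <- c_dot t x ;;
         tick (Num.max acc (1 - u / v))) 0 X ;;
  tick (l <= eps).

(* adjacency matrix as an array of rows *)
Definition step2 (X : seq pt) (eps : R) (S : seq pt) : M (seq (seq bool)) :=
  let k := size S in
  _ <- pay k ;;
  let IS := zip (iota 0 k) S in
  mmap (fun a => mmap (fun b => c_edge X eps a.1 a.2 b.1 b.2) IS) IS.

End Geometry.

Definition aget {A} (d : A) (a : seq A) (i : nat) : M A := tick (nth d a i).
Definition aset {A} (d : A) (a : seq A) (i : nat) (v : A) : M (seq A) :=
  tick (set_nth d a i v).
Definition adj_get (G : seq (seq bool)) (u v : nat) : M bool :=
  tick (nth false (nth [::] G u) v).

Record dstate := DState { dist : seq nat; pred : seq nat; vis : seq bool }.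

(* one round of (array-based) Dijkstra with unit edge weights on k vertices;
   inf := k.+1 represents infinity *)
Definition dijkstra_round (G : seq (seq bool)) (k : nat) (st : dstate)
  : M (option dstate) :=
  let inf := k.+1 in
  best <- mfoldl (fun (acc : option nat) i =>
            di <- aget inf (dist st) i ;; vi <- aget true (vis st) i ;;
            if vi || (inf <= di) then tick acc else
            match acc with
            | None => tick (Some i)
            | Some j => dj <- aget inf (dist st) j ;;
                        tick (if di < dj then Some i else Some j)
            end) None (iota 0 k) ;;
  match best with
  | None => ret None
  | Some u =>
    du <- aget inf (dist st) u ;;
    vis' <- aset false (vis st) u true ;;
    st' <- mfoldl (fun (s : dstate) v =>
             e <- adj_get G u v ;; vv <- aget true (vis s) v ;;
             dv <- aget inf (dist s) v ;;
             if e && ~~ vv && (du.+1 < dv) then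
               d' <- aset inf (dist s) v du.+1 ;; p' <- aset 0 (pred s) v u ;;
               ret (DState d' p' (vis s))
             else tick s) (DState (dist st) (pred st) vis') (iota 0 k) ;;
    ret (Some st')
  end.

Fixpoint dijkstra_loop (G : seq (seq bool)) (k fuel : nat) (st : dstate) : M dstate :=
  match fuel with
  | 0 => ret st
  | f.+1 => o <- dijkstra_round G k st ;;
            match o with None => ret st | Some st' => dijkstra_loop G k f st' end
  end.

Definition dijkstra (G : seq (seq bool)) (k s : nat) : M dstate :=
  _ <- pay (3 * k) ;;
  let st0 := DState (set_nth k.+1 (nseq k k.+1) s 0) (nseq k 0) (nseq k false) in
  dijkstra_loop G k k st0.

(* follow predecessors from u back to s (at most k steps): path s ... u *)
Fixpoint back_path (pr : seq nat) (s u fuel : nat) : M (seq nat) :=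
  match fuel with
  | 0 => ret [:: u]
  | f.+1 => if u == s then tick [:: u] else
            p <- aget 0 pr u ;; r <- back_path pr s p f ;; ret (rcons r u)
  end.

(* shortest directed cycle through s: (length, vertex indices), if any *)
Definition cycle_through (G : seq (seq bool)) (k s : nat) : M (option (nat * seq nat)) :=
  st <- dijkstra G k s ;;
  best <- mfoldl (fun (acc : option (nat * nat)) u =>
            e <- adj_get G u s ;; du <- aget k.+1 (dist st) u ;;
            if e && (du <= k) then
              tick (match acc with
                    | Some (l, w) => if du.+1 < l then Some (du.+1, u) else Some (l, w)
                    | None => Some (du.+1, u) end)
            else tick acc) None (iota 0 k) ;;
  match best with
  | None => ret None
  | Some (l, u) => p <- back_path (pred st) s u k ;; ret (Some (l, p))
  end.

Definition step3 {T} (d : T) (S : seq T) (G : seq (seq bool)) : M (seq T) :=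
  let k := size S in
  best <- mfoldl (fun (acc : option (nat * seq nat)) s =>
            c <- cycle_through G k s ;;
            tick (match acc, c with
                  | Some (l, p), Some (l', p') => if l' < l then Some (l', p') else Some (l, p)
                  | None, c => c
                  | a, None => a end)) None (iota 0 k) ;;
  match best with
  | None => ret [::]
  | Some (_, p) => _ <- pay (size p) ;; ret [seq nth d S i | i <- p]
  end.

Definition EGRMR {R : realType} (P X : seq (pt R)) (eps : R) : M (seq (pt R)) :=
  S <- step1 P X eps ;;
  G <- step2 X eps S ;;
  step3 (0, 0)%R S G.

From Pilot Require Import Defs.
From mathcomp Require Import all_boot all_order all_algebra.
From mathcomp Require Import reals.
From mathcomp Require Import zify.
Import Order.TTheory GRing.Theory Num.Theory.

Set Implicit Arguments.
Unset Strict Implicit.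
Unset Printing Implicit Defensive.

(* Every loop of E-GRMR ranges over P, over the extreme points X (a subset of
   P), or over the candidate set S, and |S| <= |X| + |P| <= 2n.  Step (1)
   costs O(n^2): two insertion sorts and, for each point of P, a scan of X
   and of the |X| hull edges.  Step (2) decides each of the |S|^2 candidate
   edges by one scan of X.  Step (3) runs |S| array-based Dijkstra searches,
   each of at most |S| rounds of O(|S|) work.  The standing condition forces
   P to be nonempty, so the lower-order terms are absorbed into n^3. *)

Lemma cost_bind A B (m : M A) (f : A -> M B) :
  cost (bind m f) = cost m + cost (f (result m)).
Proof. by case: m => a c; rewrite /bind /=; case: (f a). Qed.

Lemma result_bind A B (m : M A) (f : A -> M B) :
  result (bind m f) = result (f (result m)).
Proof. by case: m => a c; rewrite /bind /=; case: (f a). Qed.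

Lemma cost_tick A (a : A) : cost (tick a) = 1. Proof. by []. Qed.
Lemma result_tick A (a : A) : result (tick a) = a. Proof. by []. Qed.
Lemma cost_ret A (a : A) : cost (ret a) = 0. Proof. by []. Qed.
Lemma result_ret A (a : A) : result (ret a) = a. Proof. by []. Qed.
Lemma cost_pay n : cost (pay n) = n. Proof. by []. Qed.

Definition costE := (cost_bind, result_bind, cost_tick, result_tick,
  cost_ret, result_ret, cost_pay).

Lemma cost_mmap A B (f : A -> M B) c s :
  (forall x, cost (f x) <= c) -> cost (mmap f s) <= size s * c.
Proof.
move=> fc; elim: s => [|x s IHs] //=.
by rewrite !costE addn0 mulSn leq_add.
Qed.

Lemma size_mmap A B (f : A -> M B) s : size (result (mmap f s)) = size s.
Proof. by elim: s => [|x s IHs] //=; rewrite !costE /= IHs. Qed.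

Lemma mfoldl_invariant A B (I : B -> Prop) (f : B -> A -> M B) c s b :
  (forall b x, I b -> I (result (f b x)) /\ cost (f b x) <= c) -> I b ->
  I (result (mfoldl f b s)) /\ cost (mfoldl f b s) <= size s * c.
Proof.
move=> fI; elim: s b => [|x s IHs] b Ib //=.
have [Ib' cf] := fI b x Ib; have [Is cs] := IHs _ Ib'.
by rewrite !costE mulSn leq_add.
Qed.

Lemma cost_mfoldl A B (f : B -> A -> M B) c s b :
  (forall b x, cost (f b x) <= c) -> cost (mfoldl f b s) <= size s * c.
Proof. by move=> fc; case: (@mfoldl_invariant _ _ (fun=> True) f c s b). Qed.

Lemma cost_mexists A (f : A -> M bool) c s :
  (forall x, cost (f x) <= c) -> cost (mexists f s) <= size s * c.+1.
Proof. by move=> fc; apply: cost_mfoldl => b x; rewrite !costE addn1 ltnS. Qed.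

Lemma cost_mfilter A (f : A -> M bool) c s :
  (forall x, cost (f x) <= c) -> cost (mfilter f s) <= size s * c.+1.
Proof. by move=> fc; rewrite !costE addn0 mulnS addnC leq_add2l cost_mmap. Qed.

Lemma size_mfilter A (f : A -> M bool) s : size (result (mfilter f s)) <= size s.
Proof.
rewrite !costE size_map size_filter.
by apply: leq_trans (count_size _ _) _; rewrite size_zip geq_minl.
Qed.

Section InsertionSort.
Variables (A : Type) (le : A -> A -> M bool).

Lemma size_minsert x s : size (result (minsert le x s)) = (size s).+1.
Proof.
elim: s => [|y s IHs] //=; rewrite !costE.
by case: (result (le x y)); rewrite //= !costE /= IHs.
Qed.

Lemma size_msort s : size (result (msort le s)) = size s.
Proof. by elim: s => [|y s IHs] //=; rewrite !costE size_minsert IHs. Qed.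

Hypothesis le_cost1 : forall a b, cost (le a b) <= 1.

Lemma cost_minsert x s : cost (minsert le x s) <= size s.
Proof.
elim: s => [|y s IHs] //=; rewrite !costE.
by case: (result (le x y)); rewrite !costE /= ?addn0; have := le_cost1 x y; lia.
Qed.

Lemma cost_msort s : cost (msort le s) <= size s ^ 2.
Proof.
elim: s => [|y s IHs] //=; rewrite !costE.
have := cost_minsert y (result (msort le s)); rewrite size_msort; lia.
Qed.

End InsertionSort.

Section Steps.
Variables (R : realType) (X : seq (pt R)) (eps : R).

Lemma cost_le_polar (p q : pt R) : cost (c_le_polar p q) <= 1.
Proof. by rewrite cost_tick. Qed.

Lemma step1_spec P :
  size (result (step1 P X eps)) <= size X + size P /\
  cost (step1 P X eps) <= 8 * (size X + size P) ^ 2.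
Proof.
rewrite /step1 cost_bind result_bind.
have := size_msort (@c_le_polar R) X; have := cost_msort cost_le_polar X.
move: (msort _ X) => sortX sortX_cost sortX_size; set Xs := result sortX in sortX_size *.
rewrite !(cost_bind (pay _)) !(result_bind (pay _)) cost_pay cost_bind result_bind.
set pairs := zip Xs (rot 1 Xs).
have := size_mmap (fun pr => c_xstar pr.1 pr.2) pairs.
have := @cost_mmap _ _ (fun pr : pt R * pt R => c_xstar pr.1 pr.2) 1 pairs (fun _ => leqnn 1).
rewrite size_zip size_rot minnn sortX_size muln1.
move: (mmap _ pairs) => hull hull_cost hull_size; set xs := result hull in hull_size *.
rewrite !(cost_bind (pay _)) !(result_bind (pay _)) cost_pay cost_bind result_bind.
set test := (fun p => _).
have test_cost p : cost (test p) <= 6 * size X.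
  rewrite /test !costE.
  have mem_cost : cost (c_mem p X) <= size X * 2 by apply: cost_mexists.
  case: (result _); rewrite ?costE; first lia.
  set scan := mexists _ _.
  have : cost scan <= size (zip Xs xs) * 3.+1.
    by apply: cost_mexists => tx; rewrite !costE.
  rewrite size_zip sortX_size hull_size minnn; lia.
have := size_mfilter test P; have := cost_mfilter P test_cost.
move: (mfilter test P) => filt filt_cost filt_size; set extra := result filt in filt_size *.
rewrite !(cost_bind (pay _)) !(result_bind (pay _)) cost_pay.
have := size_msort (@c_le_polar R) (X ++ extra); have := cost_msort cost_le_polar (X ++ extra).
rewrite size_cat => sort_cost ->; split; first lia.
have : (size X + size extra) ^ 2 <= (size X + size P) ^ 2 by rewrite leq_exp2r // leq_add2l.
nia.
Qed.

Lemma cost_c_edge i si j sj : cost (c_edge X eps i si j sj) <= 4 * size X + 3.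
Proof.
rewrite /c_edge; case: ifP => _; first by rewrite cost_tick; lia.
rewrite !costE; case: ifP => _; rewrite !costE; first lia.
set scan := mfoldl _ _ X.
have : cost scan <= size X * 4.
  by apply: cost_mfoldl => acc t; rewrite !costE; case: ifP => _; rewrite !costE.
lia.
Qed.

Lemma cost_step2 S : cost (step2 X eps S) <= size S + size S ^ 2 * (4 * size X + 3).
Proof.
rewrite /step2 !costE leq_add2l.
set IS := zip _ _; have size_IS : size IS = size S by rewrite size_zip size_iota minnn.
rewrite -mulnn -mulnA -size_IS.
by apply: cost_mmap => a; apply: cost_mmap => b; apply: cost_c_edge.
Qed.

End Steps.

Lemma cost_dijkstra_round G k st : cost (dijkstra_round G k st) <= 10 * k + 2.
Proof.
rewrite /dijkstra_round cost_bind.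
set select := mfoldl _ None _.
have : cost select <= size (iota 0 k) * 4.
  apply: cost_mfoldl => acc i; rewrite !costE; case: ifP => _; rewrite ?costE //.
  by case: acc => [j|]; rewrite !costE.
rewrite size_iota; case: (result select) => [u|]; rewrite !costE; last lia.
set relax := mfoldl _ _ _.
have : cost relax <= size (iota 0 k) * 6.
  by apply: cost_mfoldl => st' v; rewrite !costE; case: ifP => _; rewrite !costE.
rewrite size_iota; lia.
Qed.

Lemma cost_dijkstra_loop G k fuel st :
  cost (dijkstra_loop G k fuel st) <= fuel * (10 * k + 2).
Proof.
elim: fuel st => [|f IHf] st //=.
rewrite cost_bind mulSn; have := cost_dijkstra_round G k st.
case: (result _) => [st'|]; rewrite ?costE; last lia.
by have := IHf st'; lia.
Qed.

Lemma cost_dijkstra G k s : cost (dijkstra G k s) <= 15 * k ^ 2.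
Proof.
rewrite /dijkstra !costE; set st0 := DState _ _ _.
by have := cost_dijkstra_loop G k k st0; nia.
Qed.

Lemma back_pathS pr s u fuel :
  back_path pr s u fuel.+1 = if u == s then tick [:: u] else
    (p <- aget 0 pr u ;; r <- back_path pr s p fuel ;; ret (rcons r u)).
Proof. by []. Qed.

Lemma size_back_path pr s u fuel : size (result (back_path pr s u fuel)) <= fuel.+1.
Proof.
elim: fuel u => [|f IHf] u //; rewrite back_pathS; case: ifP => _ //.
by rewrite !costE size_rcons ltnS IHf.
Qed.

Lemma cost_back_path pr s u fuel : cost (back_path pr s u fuel) <= fuel.
Proof.
elim: fuel u => [|f IHf] u //; rewrite back_pathS; case: ifP => _ //.
by rewrite !costE addn0 add1n ltnS IHf.
Qed.

(* Bounds the final copy of the best cycle in [step3]. *)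
Definition cycle_size_le (k : nat) (c : option (nat * seq nat)) : bool :=
  if c is Some (_, p) then size p <= k.+1 else true.

Lemma cycle_through_spec G k s :
  cycle_size_le k (result (cycle_through G k s)) /\
  cost (cycle_through G k s) <= 19 * k ^ 2.
Proof.
rewrite /cycle_through cost_bind result_bind.
have := cost_dijkstra G k s; move: (dijkstra G k s) => dij dij_cost.
rewrite cost_bind result_bind; set close := mfoldl _ None _.
have : cost close <= size (iota 0 k) * 3.
  by apply: cost_mfoldl => acc u; rewrite !costE; case: ifP => _; rewrite !costE.
rewrite size_iota; case: (result close) => [[l u]|]; rewrite !costE; last by split => //; nia.
split; first exact: size_back_path.
by have := cost_back_path (Defs.pred (result dij)) s u k; nia.
Qed.

Lemma cost_step3 T (d : T) S G : cost (step3 d S G) <= 20 * (size S).+1 ^ 3.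
Proof.
rewrite /step3 cost_bind; set k := size S; set scan := mfoldl _ None _.
have [scan_size scan_cost] :
    cycle_size_le k (result scan) /\ cost scan <= size (iota 0 k) * (19 * k ^ 2).+1.
  apply: (@mfoldl_invariant _ _ (cycle_size_le k)) => // acc s acc_ok.
  have [c_ok c_cost] := cycle_through_spec G k s.
  move: (cycle_through G k s) c_ok c_cost => c c_ok c_cost.
  rewrite !costE; split; last by rewrite addn1 ltnS.
  move: acc_ok c_ok; case: (result _) => [[l' p']|]; case: acc => [[l p]|] //=.
  by case: ifP.
rewrite size_iota in scan_cost.
move: scan_size; case: (result scan) => [[l p]|] /= p_size; rewrite ?costE; nia.
Qed.

Lemma cost_EGRMR (R : realType) (P X : seq (pt R)) eps :
  cost (EGRMR P X eps) <= 32 * (size X + size P).+1 ^ 3.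
Proof.
have [S_size S_cost] := step1_spec X eps P.
rewrite /EGRMR cost_bind; move: (step1 P X eps) S_size S_cost => step1 S_size S_cost.
rewrite cost_bind.
have := cost_step3 (0, 0)%R (result step1) (result (step2 X eps (result step1))).
have := cost_step2 X eps (result step1).
move: (cost step1) (cost (step2 _ _ _)) (cost (step3 _ _ _)) S_cost => a b c.
have : size X <= size X + size P by rewrite leq_addr.
move: (size (result step1)) (size X) (size X + size P) S_size => k m N k_le m_le a_le b_le c_le.
have k3 : k.+1 ^ 3 <= N.+1 ^ 3 by rewrite leq_exp2r.
have k2 : k ^ 2 * (4 * m + 3) <= N ^ 2 * (4 * N + 3).
  by rewrite leq_mul ?leq_exp2r // leq_add2r leq_mul2l m_le.
nia.
Qed.

Lemma standing_size_gt0 (R : realType) (P : seq (pt R)) : standing P -> 0 < size P.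
Proof.
case: P => [|//] standing_nil; exfalso.
have e1_unit : is_unit ((1, 0) : pt R)%R.
  by rewrite /is_unit /normp /= expr1n expr0n /= addr0 sqrtr1.
have := standing_nil _ e1_unit.
by rewrite /omega big_nil /dotp /= !mul0r addr0 ltxx.
Qed.

Lemma extreme_points_size_le (R : realType) (P X : seq (pt R)) :
  uniq X -> (forall p, p \in X <-> extreme_point P p) -> size X <= size P.
Proof. by move=> uX X_extreme; apply: uniq_leq_size => // p /X_extreme []. Qed.

Local Open Scope ring_scope.

Theorem theorem3 :
  exists C : nat,
  forall (R : realType) (P X : seq (pt R)) (eps : R),
    uniq P ->
    standing P ->
    uniq X ->
    (forall p : pt R, p \in X <-> extreme_point P p) ->
    0 < eps < 1 ->
    (cost (EGRMR P X eps) <= C * (size P) ^ 3)%N.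
Proof.
exists (32 * 3 ^ 3)%N => R P X eps _ P_standing X_uniq X_extreme _.
have n_gt0 := standing_size_gt0 P_standing.
have m_le_n := extreme_points_size_le X_uniq X_extreme.
apply: leq_trans (cost_EGRMR P X eps) _.
rewrite -mulnA leq_mul2l -expnMn leq_exp2r //.
lia.
Qed.
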